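(* The smallest cardinality of a self-binding group is at most $\mathfrak{se}$.
   Context: All groups are abelian. A group is torsionless if it embeds in $\mathbb{Z}^I$ for some set $I$. Rank means torsion-free rank. A group $G$ binds a subgroup $H$ if every homomorphism from $G$ to a free abelian group maps $H$ into a group of finite rank. A torsionless group is self-binding if it has infinite rank and binds itself. A torsionless group $G$ exhibits the Specker phenomenon if there is a sequence $(a_n)_{n\in\omega}$ of nonzero elements of $G$ such that every homomorphism $G\to\mathbb{Z}$ maps all but finitely many $a_n$ to $0$. $\mathfrak{se}$ denotes the smallest cardinality of a group exhibiting the Specker phenomenon (equivalently, the smallest cardinality of a group $G$ with $\mathbb{Z}^{(\omega)}\subseteq G\subseteq\mathbb{Z}^\omega$ such that every homomorphism $G\to\mathbb{Z}$ vanishes on all but finitely many standard unit vectors $e_n$). *)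

From Stdlib Require List.
From mathcomp Require Import all_boot all_order all_algebra.
Set Implicit Arguments. Unset Strict Implicit. Unset Printing Implicit Defensive.
Import GRing.Theory.
Local Open Scope ring_scope.

(* additive maps G -> Z^I, represented pointwise as G -> I -> int *)
Definition additive_fun (G : zmodType) (I : Type) (e : G -> I -> int) : Prop :=
  forall x y i, e (x + y) i = e x i + e y i.

Definition torsionless (G : zmodType) : Prop :=
  exists (I : Type) (e : G -> I -> int), additive_fun e /\ injective e.

Definition Zindep (G : zmodType) (m : nat) (x : 'I_m -> G) : Prop :=
  forall c : 'I_m -> int, \sum_(i < m) x i *~ c i = 0 -> forall i, c i = 0.

Definition Zindep_fun (J : Type) (m : nat) (v : 'I_m -> J -> int) : Prop :=
  forall c : 'I_m -> int, (forall j, \sum_(i < m) c i * v i j = 0) ->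
    forall i, c i = 0.

Definition infinite_rank (G : zmodType) : Prop :=
  forall n : nat, exists m (x : 'I_m -> G), (n < m)%N /\ Zindep x.

(* phi : G -> Z^(J) is a homomorphism into the free abelian group with basis J
   (finitely supported functions J -> Z) *)
Definition hom_to_free (G : zmodType) (J : Type) (phi : G -> J -> int) : Prop :=
  additive_fun phi /\
  forall g, exists s : list J, forall j, ~ List.In j s -> phi g j = 0.

(* G binds the subgroup H (given as a predicate): every homomorphism from G to a
   free abelian group maps H into a subgroup of finite (torsion-free) rank *)
Definition binds (G : zmodType) (H : G -> Prop) : Prop :=
  forall (J : Type) (phi : G -> J -> int), hom_to_free phi ->
    exists n : nat, forall m (x : 'I_m -> G), (forall i, H (x i)) ->
      Zindep_fun (fun i => phi (x i)) -> (m <= n)%N.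

Definition self_binding (G : zmodType) : Prop :=
  torsionless G /\ infinite_rank G /\ binds (fun _ : G => True).

Definition specker (G : zmodType) : Prop :=
  torsionless G /\
  exists a : nat -> G, (forall n, a n != 0) /\
    forall f : G -> int, (forall x y, f (x + y) = f x + f y) ->
      exists N : nat, forall n, (N <= n)%N -> f (a n) = 0.

(* Let (a_n) witness the Specker phenomenon in the torsionless group H.
   Eliminating against finitely many earlier homomorphisms, all of which vanish
   far out along (a_n), gives homomorphisms g_k : H -> Z and indices n_k >= k
   with g_k (a_(n_l)) <> 0 iff k = l.  Put Psi h = (k! g_k h)_k and let G be the
   pure closure of Psi(H) + Z^(omega) in Z^omega; an element of G is coded by a
   natural number and an element of H, and N x H embeds in H.
   As k! eventually absorbs every m, each y in G is divisible by every m modulo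
   Z^(omega); hence a homomorphism G -> Z^(J) killing the unit vectors e_l,
   l >= L, depends only on the first L coordinates, and its image has rank at
   most L.  Such an L exists: otherwise a sliding hump yields a homomorphism
   G -> Z that is nonzero on infinitely many e_l, i.e. on infinitely many
   Psi (a_(n_l)) = l! g_l (a_(n_l)) e_l, contradicting the Specker property. *)

From HB Require Import structures.
From mathcomp Require Import all_boot all_order all_algebra.
From mathcomp Require Import boolp functions.
Set Implicit Arguments. Unset Strict Implicit. Unset Printing Implicit Defensive.
Import GRing.Theory Num.Theory.
Local Open Scope ring_scope.

Section AdditiveMaps.
Context {G V : zmodType} {f : G -> V}.
Hypothesis fD : {morph f : x y / x + y}.

Lemma addmorphB : zmod_morphism f.
Proof. by move=> x y; apply/eqP; rewrite eq_sym subr_eq -fD subrK. Qed.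

#[local] HB.instance Definition _ := GRing.isZmodMorphism.Build G V f addmorphB.

Lemma addmorph0 : f 0 = 0. Proof. exact: raddf0. Qed.
Lemma addmorphMn x n : f (x *+ n) = f x *+ n. Proof. exact: raddfMn. Qed.
Lemma addmorphMz x z : f (x *~ z) = f x *~ z. Proof. exact: raddfMz. Qed.
Lemma addmorph_sum (I : Type) (r : seq I) (F : I -> G) :
  f (\sum_(i <- r) F i) = \sum_(i <- r) f (F i).
Proof. exact: raddf_sum. Qed.

End AdditiveMaps.

Lemma additive_fun_morph (G : zmodType) (I : Type) (e : G -> I -> int) :
  additive_fun e -> forall i, {morph e^~ i : x y / x + y}.
Proof. by move=> eD i x y; apply: eD. Qed.

Lemma eventually_forall_ltn (P : nat -> nat -> Prop) k :
  (forall i, (i < k)%N -> exists N, forall n, (N <= n)%N -> P i n) ->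
  exists N, forall i n, (i < k)%N -> (N <= n)%N -> P i n.
Proof.
elim: k => [|k IHk] Pk; first by exists 0%N.
have [N1 HN1] := IHk (fun i ik => Pk i (ltnW ik)).
have [N2 HN2] := Pk k (ltnSn k).
exists (maxn N1 N2) => i n; rewrite ltnS leq_eqVlt geq_max.
by case/orP=> [/eqP -> | ik] /andP[N1n N2n]; [exact: HN2 | exact: HN1].
Qed.

Lemma eventually_forall_in (J : Type) (P : J -> nat -> Prop) (s : list J) :
  (forall j, List.In j s -> exists N, forall n, (N <= n)%N -> P j n) ->
  exists N, forall j n, List.In j s -> (N <= n)%N -> P j n.
Proof.
elim: s => [|j0 s IHs] Ps; first by exists 0%N.
have [N1 HN1] := IHs (fun j js => Ps j (or_intror js)).
have [N2 HN2] := Ps j0 (or_introl erefl).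
exists (maxn N1 N2) => j n /= js; rewrite geq_max => /andP[N1n N2n].
by case: js => [<- | js]; [exact: HN2 | exact: HN1].
Qed.

Lemma big_ord_eventually0 (V : nmodType) (u : nat -> V) M M' :
  (forall k, (M <= k)%N -> u k = 0) -> (forall k, (M' <= k)%N -> u k = 0) ->
  \sum_(k < M) u k = \sum_(k < M') u k.
Proof.
wlog MM' : M M' / (M <= M')%N => [hyp uM uM' | uM _].
  by case: (leqP M M') => [|/ltnW] MM'; [exact: hyp | symmetry; exact: hyp].
rewrite (big_ord_widen _ _ MM') big_mkcond; apply: eq_bigr => k _.
by case: ltnP => // /uM ->.
Qed.

Definition pairwise_upto (T : Type) (t0 : T) (Q : nat -> nat -> T -> T -> Prop)
  (s : seq T) :=
  forall i j, (i < size s)%N -> (j < size s)%N -> Q i j (nth t0 s i) (nth t0 s j).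

Lemma pairwise_choice (T : Type) (t0 : T) (Q : nat -> nat -> T -> T -> Prop) :
  (forall s, pairwise_upto t0 Q s -> exists x, pairwise_upto t0 Q (rcons s x)) ->
  exists u : nat -> T, forall i j, Q i j (u i) (u j).
Proof.
pose P := pairwise_upto t0 Q; move=> Pext.
have P0 : P [::] by [].
pose next (s : {s | P s}) : {x | P (rcons (sval s) x)} := cid (Pext _ (svalP s)).
pose fix hist k : {s | P s} :=
  if k is k'.+1 then exist P _ (svalP (next (hist k'))) else exist P [::] P0.
pose u k := sval (next (hist k)).
have histE k : sval (hist k) = mkseq u k.
  by elim: k => [|k IHk] //; rewrite mkseqS -IHk.
exists u => i j; have := svalP (hist (maxn i j).+1); rewrite histE.
by move/(_ i j); rewrite size_mkseq !nth_mkseq ?ltnS ?leq_maxl ?leq_maxr //; apply.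
Qed.

Section Torsionless.
Variable H : zmodType.
Hypothesis H_torsionless : torsionless H.

Lemma torsionless_separating (x : H) : x != 0 ->
  exists g : H -> int, {morph g : u v / u + v} /\ g x != 0.
Proof.
have [I [e [eD e_inj]]] := H_torsionless.
move=> x_neq0; have [i exi] : exists i, e x i != 0.
  apply: contrapT => /forallNP e0; move/eqP: x_neq0; apply; apply/e_inj/funext => i.
  by rewrite (addmorph0 (additive_fun_morph eD i)); apply/eqP/negbNE/negP.
by exists (e^~ i); split; first exact: additive_fun_morph.
Qed.

Lemma torsionless_mulIz (z : int) : z != 0 -> injective (fun x : H => x *~ z).
Proof.
have [I [e [eD e_inj]]] := H_torsionless.
move=> z_neq0 x y /= xyz; apply/e_inj/funext => i; apply: (mulIf z_neq0).
by rewrite -!mulrzz -!(addmorphMz (additive_fun_morph eD i)) xyz.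
Qed.

Lemma torsionless_pair_inj (x : H) : x != 0 -> exists f : nat * H -> H, injective f.
Proof.
move=> x_neq0; have [g [gD gx_neq0]] := torsionless_separating x_neq0.
(* [g] reads [pickle (n, g h)] off [enc (n, h)]; what remains is [h *~ g x],
   which determines [h] because [H] is torsion-free. *)
pose enc (p : nat * H) := p.2 *~ g x - x *~ g p.2 + x *+ pickle (p.1, g p.2).
have g_enc n h : g (enc (n, h)) = g x *+ pickle (n, g h).
  rewrite gD (addmorphB gD) !(addmorphMz gD) (addmorphMn gD).
  by rewrite !mulrzz mulrC subrr add0r.
exists enc => -[n h] [n' h'] enc_eq.
have [en gh] : (n', g h') = (n, g h).
  by apply/(pcan_inj pickleK)/(mulrIn gx_neq0); rewrite -!g_enc enc_eq.
move: enc_eq; rewrite /enc /= en gh => /addIr/addIr/(torsionless_mulIz gx_neq0).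
by move->.
Qed.

End Torsionless.

Lemma int_mx_ker m n (A : 'M[int]_(m, n)) : (n < m)%N ->
  exists2 c : 'rV[int]_m, c != 0 & c *m A = 0.
Proof.
move=> lt_nm; pose S := map_mx (intr : int -> rat) A.
have /rowV0Pn [v /sub_kermxP vS v_neq0] : kermx S != 0.
  by rewrite -mxrank_eq0 mxrank_ker subn_eq0 -ltnNge (leq_ltn_trans (rank_leq_col S)).
pose d : int := \prod_j denq (v 0 j).
have d_neq0 : d%:~R != 0 :> rat.
  by rewrite intr_eq0; apply/prodf_neq0 => j _; apply: denq_neq0.
pose c := map_mx numq (d%:~R *: v).
have cE : map_mx intr c = d%:~R *: v.
  apply/rowP => j; rewrite !mxE mulrC [d](bigD1 j) //= rmorphM mulrA -numqE.
  by rewrite -rmorphM numq_int.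
exists c.
  apply: contraNneq v_neq0 => c0; move: cE; rewrite c0 map_mx0 => /esym/eqP.
  by rewrite scalemx_eq0 (negbTE d_neq0).
have : map_mx intr (c *m A) = 0 :> 'M[rat]_(1, n).
  by rewrite map_mxM cE -scalemxAl vS scaler0.
move/matrixP => cA0; apply/matrixP => i j; move: (cA0 i j); rewrite !mxE.
by move/eqP; rewrite intr_eq0 => /eqP.
Qed.

Definition fin_supported (J : Type) (x : J -> int) :=
  exists s : list J, forall j, ~ List.In j s -> x j = 0.

Lemma fin_supported_eventually0 (J : Type) (v : nat -> J -> int) (x : J -> int) :
  fin_supported x -> (forall j, exists L, forall l, (L <= l)%N -> v l j = 0) ->
  exists L, forall j l, x j != 0 -> (L <= l)%N -> v l j = 0.
Proof.
move=> [s xs] v_coord.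
have [L HL] := eventually_forall_in (s := s) (fun j _ => v_coord j).
exists L => j l xj Ll; apply: HL Ll; apply: contrapT => /xs/eqP.
exact/negP.
Qed.

Lemma injective_eventually_notin (J : Type) (j : nat -> J) (s : list J) :
  injective j -> exists M, forall k, (M <= k)%N -> ~ List.In (j k) s.
Proof.
move=> j_inj; have [M HM] : exists M, forall y k, List.In y s -> (M <= k)%N -> j k <> y.
  apply: eventually_forall_in => y _.
  case: (pselect (exists k, j k = y)) => [[k0 <-] | no_k].
    by exists k0.+1 => k k0k /j_inj ek; rewrite ek ltnn in k0k.
  by exists 0%N => k _ jk; apply: no_k; exists k.
by exists M => k Mk jks; apply: (HM _ k jks Mk).
Qed.

Lemma additive_sum_along (G : zmodType) (J : Type) (phi : G -> J -> int)
    (j : nat -> J) : hom_to_free phi -> injective j ->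
  exists F : G -> int, {morph F : x y / x + y} /\ forall x M,
    (forall k, (M <= k)%N -> phi x (j k) = 0) -> F x = \sum_(k < M) phi x (j k).
Proof.
move=> [phiD phi_fin] j_inj.
have phi_j_eventually0 x : exists M, forall k, (M <= k)%N -> phi x (j k) = 0.
  have [s xs] := phi_fin x; have [M HM] := injective_eventually_notin s j_inj.
  by exists M => k /HM; apply: xs.
have [M MP] := choice phi_j_eventually0.
exists (fun x => \sum_(k < M x) phi x (j k)); split=> [x y | x M' xM']; last first.
  exact: big_ord_eventually0 (MP x) xM'.
pose Mxy := maxn (M (x + y)) (maxn (M x) (M y)).
have sum_Mxy z : (M z <= Mxy)%N ->
    \sum_(k < M z) phi z (j k) = \sum_(k < Mxy) phi z (j k).
  by move=> Mz; apply: big_ord_eventually0 (MP z) _ => k /(leq_trans Mz)/MP.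
rewrite !sum_Mxy ?leq_max ?leqnn ?orbT // -big_split.
by apply: eq_bigr => k _; rewrite phiD.
Qed.

Section SlidingHump.
Variables (J : Type) (v : nat -> J -> int).
Hypothesis v_fin : forall l, fin_supported (v l).
Hypothesis v_coord : forall j, exists L, forall l, (L <= l)%N -> v l j = 0.
Hypothesis v_unbounded : forall L, exists l j, (L <= l)%N /\ v l j != 0.

Definition hump (k k' : nat) (p p' : nat * J) :=
  (k <= p.1)%N /\ (v p.1 p'.2 == 0) = (k != k').

Lemma hump_rcons p0 s : pairwise_upto p0 hump s ->
  exists p, pairwise_upto p0 hump (rcons s p).
Proof.
move=> hs; pose k := size s; pose l i := (nth p0 s i).1.
have [N vN] : exists N, forall i n, (i < k)%N -> (N <= n)%N ->
    forall y, v (l i) y != 0 -> v n y = 0.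
  apply: eventually_forall_ltn => i _.
  have [N vN] := fin_supported_eventually0 (v_fin (l i)) v_coord.
  by exists N => n Nn y vy; apply: vN.
have [n [y [Nkn vny]]] := v_unbounded (maxn N k).
have /andP[Nn kn] : (N <= n)%N && (k <= n)%N by rewrite -geq_max.
move: vN; rewrite /l => vN.
exists (n, y) => i i'; rewrite size_rcons !ltnS [(i <= _)%N]leq_eqVlt.
rewrite [(i' <= _)%N]leq_eqVlt /hump !nth_rcons -/k.
case/orP=> [/eqP -> | ik]; case/orP=> [/eqP -> | i'k] /=.
- by rewrite ltnn !eqxx kn (negbTE vny).
- rewrite ltnn i'k eqxx gtn_eqF // kn (vN i') //.
  by have := hs i' i' i'k i'k; rewrite /hump eqxx => -[_ ->].
- rewrite ik ltnn eqxx ltn_eqF //.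
  have := hs i i ik ik; rewrite /hump => -[-> _]; split=> //.
  by apply: contraNT vny => vly; apply/eqP/(vN i).
- by rewrite ik i'k; apply: hs.
Qed.

End SlidingHump.

Lemma sliding_hump (J : Type) (v : nat -> J -> int) :
  (forall l, fin_supported (v l)) ->
  (forall j, exists L, forall l, (L <= l)%N -> v l j = 0) ->
  (forall L, exists l j, (L <= l)%N /\ v l j != 0) ->
  exists (l : nat -> nat) (j : nat -> J),
    (forall k, (k <= l k)%N) /\ forall k k', (v (l k) (j k') == 0) = (k != k').
Proof.
move=> v_fin v_coord v_unbounded; have [_ [j0 _]] := v_unbounded 0%N.
have [u hu] := pairwise_choice (hump_rcons v_fin v_coord v_unbounded (p0 := (0%N, j0))).
by exists (fst \o u), (snd \o u); split=> [k | k k']; [case: (hu k k) | case: (hu k k')].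
Qed.

(* [pure_hull Psi] is the pure closure of Psi(H) + Z^(omega) in Z^omega. *)
Definition pure_hull (H : zmodType) (Psi : {additive H -> nat -> int}) :
    pred (nat -> int) := fun y =>
  `[< exists n h M, (0 < n)%N /\ forall i, (M <= i)%N -> y i *+ n = Psi h i >].

Lemma pure_hull_zmod_closed (H : zmodType) (Psi : {additive H -> nat -> int}) :
  zmod_closed (pure_hull Psi).
Proof.
split.
  by apply/asboolP; exists 1%N, 0, 0%N; split => // i _; rewrite raddf0.
move=> x y /asboolP[n1 [h1 [M1 [n1_gt0 xE]]]] /asboolP[n2 [h2 [M2 [n2_gt0 yE]]]].
apply/asboolP; exists (n1 * n2)%N, (h1 *+ n2 - h2 *+ n1), (maxn M1 M2).
split=> [|i]; first by rewrite muln_gt0 n1_gt0.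
rewrite geq_max raddfB !raddfMn => /andP[/xE xi /yE yi].
rewrite !(addrfctE, opprfctE, natmulfctE) /= opprfctE -xi -yi mulNrn mulrnBl.
by rewrite -!mulrnA (mulnC n2).
Qed.

HB.instance Definition _ (H : zmodType) (Psi : {additive H -> nat -> int}) :=
  GRing.isZmodClosed.Build (nat -> int) (pure_hull Psi) (pure_hull_zmod_closed Psi).

Definition hull (H : zmodType) (Psi : {additive H -> nat -> int}) :=
  {y : nat -> int | y \in pure_hull Psi}.

HB.instance Definition _ H Psi := [isSub for (@sval _ _ : @hull H Psi -> _)].
HB.instance Definition _ H Psi := [Choice of @hull H Psi by <:].
HB.instance Definition _ H Psi := [SubChoice_isSubZmodule of @hull H Psi by <:].

Definition hull_coord (H : zmodType) (Psi : {additive H -> nat -> int}) (i : nat)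
  (y : hull Psi) : int := val y i.

HB.instance Definition _ H Psi i :=
  GRing.isZmodMorphism.Build (hull Psi) int (@hull_coord H Psi i) (fun _ _ => erefl).

Section Hull.
Variables (H : zmodType) (Psi : {additive H -> nat -> int}).
Local Notation hull := (hull Psi).
Local Notation hull_coord := (@hull_coord H Psi).

Lemma hull_coord_inj (x y : hull) : (forall i, hull_coord i x = hull_coord i y) -> x = y.
Proof. by move=> xy; apply/val_inj/funext. Qed.

Lemma unit_in_pure_hull l : (fun i => (i == l)%:R) \in pure_hull Psi.
Proof.
apply/asboolP; exists 1%N, 0, l.+1; split=> // i li.
by rewrite raddf0 (gtn_eqF li).
Qed.

Definition hull_unit l : hull := Sub (fun i => (i == l)%:R) (unit_in_pure_hull l).

Lemma hull_coord_unit i l : hull_coord i (hull_unit l) = (i == l)%:R.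
Proof. by []. Qed.

Lemma Psi_in_pure_hull h : Psi h \in pure_hull Psi.
Proof. by apply/asboolP; exists 1%N, h, 0%N. Qed.

Definition hull_of h : hull := Sub (Psi h) (Psi_in_pure_hull h).

Lemma hull_coord_of i h : hull_coord i (hull_of h) = Psi h i.
Proof. by []. Qed.

Lemma hull_ofD : {morph hull_of : x y / x + y}.
Proof. by move=> x y; apply: val_inj; rewrite /= raddfD. Qed.

Lemma hull_coord_sum_unit M (c : 'I_M -> int) k :
  hull_coord k (\sum_(l < M) hull_unit l *~ c l) = \sum_(l < M | l == k :> nat) c l.
Proof.
rewrite raddf_sum [RHS]big_mkcond; apply: eq_bigr => l _.
by rewrite raddfMz /= hull_coord_unit eq_sym; case: eqP; rewrite ?mul0rz ?intz.
Qed.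

Lemma hull_fin_decomp (y : hull) M : (forall i, (M <= i)%N -> hull_coord i y = 0) ->
  y = \sum_(i < M) hull_unit i *~ hull_coord i y.
Proof.
move=> yM; apply: hull_coord_inj => k.
rewrite hull_coord_sum_unit (big_ord1_eq _ (fun i => hull_coord i y)).
by case: ltnP => // /yM.
Qed.

Lemma hull_inj_pair : exists f : hull -> nat * H, injective f.
Proof.
have wit (y : hull) : exists w : nat * H * nat, (0 < w.1.1)%N /\
    forall i, (w.2 <= i)%N -> hull_coord i y *+ w.1.1 = Psi w.1.2 i.
  by have /asboolP[n [h [M yE]]] := valP y; exists (n, h, M).
have [w wP] := choice wit.
exists (fun y =>
  (pickle ((w y).1.1, (w y).2, mkseq (hull_coord^~ y) (w y).2), (w y).1.2)).
move=> y y' /=; have := wP y; have := wP y'.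
case: (w y) => [[n h] M]; case: (w y') => [[n' h'] M'] /= [_ y'E] [n_gt0 yE].
move=> [/(pcan_inj pickleK) [en eM ey] eh]; subst n' M' h'; apply: hull_coord_inj => i.
case: (ltnP i M) => iM; last by apply: (pmulrnI n_gt0); rewrite /= yE ?y'E.
by have := congr1 (nth 0 ^~ i) ey; rewrite !nth_mkseq.
Qed.

Hypothesis Psi_dvd : forall h m, (0 < m)%N ->
  exists M, forall i, (M <= i)%N -> (m %| Psi h i)%Z.

Lemma hull_eventually_dvd (y : hull) m : (0 < m)%N ->
  exists M, forall i, (M <= i)%N -> (m %| hull_coord i y)%Z.
Proof.
move=> m_gt0; have /asboolP[n [h [M [n_gt0 yE]]]] := valP y.
have nm_gt0 : (0 < n * m)%N by rewrite muln_gt0 n_gt0.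
have [M' HM'] := Psi_dvd h nm_gt0.
exists (maxn M M') => i; rewrite geq_max => /andP[/yE yi /HM'].
by rewrite -yi -mulr_natr natz mulnC PoszM dvdz_mul2r // eqz_nat -lt0n.
Qed.

Lemma hull_divmod (y : hull) m : (0 < m)%N ->
  exists z : hull, forall i, hull_coord i (y - z *+ m) = (hull_coord i y %% m)%Z.
Proof.
move=> m_gt0; have /asboolP[n [h [M [n_gt0 yE]]]] := valP y.
have [M' yM'] := hull_eventually_dvd y m_gt0.
pose q i := (hull_coord i y %/ m)%Z.
have q_in : q \in pure_hull Psi.
  apply/asboolP; exists (n * m)%N, h, (maxn M M').
  split=> [|i]; first by rewrite muln_gt0 n_gt0.
  rewrite geq_max => /andP[/yE <- /yM' dvd]; rewrite mulnC mulrnA; congr (_ *+ _).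
  by rewrite -mulr_natr natz divzK.
exists (Sub q q_in) => i; rewrite raddfB raddfMn /=.
by rewrite {1}(divz_eq (hull_coord i y) m) -mulr_natr natz addrAC subrr add0r.
Qed.

(* Up to a combination of the [hull_unit i] with [L <= i], which [phi] kills,
   [y] is divisible by every [m]; so every [m] divides [phi y j]. *)
Lemma hull_hom_vanish (J : Type) (phi : hull -> J -> int) L :
  additive_fun phi -> (forall l, (L <= l)%N -> forall j, phi (hull_unit l) j = 0) ->
  forall y : hull, (forall i, (i < L)%N -> hull_coord i y = 0) -> forall j, phi y j = 0.
Proof.
move=> phiD phi_unit y yL j; have phijD := additive_fun_morph phiD j.
pose m := (`|phi y j|).+1.
have [z yz] := hull_divmod y (ltn0Sn _ : 0 < m)%N.
have [M yM] := hull_eventually_dvd y (ltn0Sn _ : 0 < m)%N.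
have w0 : phi (y - z *+ m) j = 0.
  rewrite (@hull_fin_decomp (y - z *+ m) M) => [|i /yM]; last first.
    by rewrite yz => /dvdz_mod0P.
  rewrite (addmorph_sum phijD) big1 // => i _; rewrite (addmorphMz phijD).
  case: (ltnP i L) => [/yL yi | /phi_unit ->]; last by rewrite mul0rz.
  by rewrite yz yi mod0z mulr0z.
have : (m %| phi y j)%Z.
  move/eqP: w0; rewrite (addmorphB phijD) (addmorphMn phijD) subr_eq0 => /eqP ->.
  by rewrite -mulr_natr natz dvdz_mull.
apply: contraTeq => yj_neq0.
by rewrite dvdzE gtnNdvd ?absz_gt0.
Qed.
Variables (b : nat -> H) (d : nat -> int).
Hypothesis d_neq0 : forall l, d l != 0.
Hypothesis Psi_b : forall l i, Psi (b l) i = if i == l then d l else 0.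
Hypothesis b_specker : forall f : H -> int, {morph f : x y / x + y} ->
  exists N, forall l, (N <= l)%N -> f (b l) = 0.

Lemma hull_of_b l : hull_of (b l) = hull_unit l *~ d l.
Proof.
apply: hull_coord_inj => i; rewrite raddfMz /= hull_coord_unit hull_coord_of Psi_b.
by case: eqP; rewrite ?mul0rz ?intz.
Qed.

Lemma hull_hom_unit_eventually0 (J : Type) (phi : hull -> J -> int) :
  hom_to_free phi -> exists L, forall l, (L <= l)%N -> forall j, phi (hull_unit l) j = 0.
Proof.
move=> phi_free; have [phiD phi_fin] := phi_free.
have hull_of_specker (F : hull -> int) : {morph F : x y / x + y} ->
    exists N, forall l, (N <= l)%N -> F (hull_unit l) *~ d l = 0.
  move=> FD; have FbD : {morph F \o hull_of : x y / x + y}.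
    by move=> x y; rewrite /= hull_ofD FD.
  have [N HN] := b_specker FbD.
  by exists N => l /HN; rewrite /= hull_of_b (addmorphMz FD).
have unit_coord j : exists L, forall l, (L <= l)%N -> phi (hull_unit l) j = 0.
  have [L HL] := hull_of_specker _ (additive_fun_morph phiD j).
  by exists L => l /HL /eqP; rewrite mulrzz mulf_eq0 (negbTE (d_neq0 l)) orbF => /eqP.
(* Otherwise a sliding hump gives a homomorphism [F] that is nonzero on
   infinitely many [e_l], i.e. on infinitely many [hull_of (b l)]. *)
apply: contrapT => no_bound.
have unbounded L : exists l j, (L <= l)%N /\ phi (hull_unit l) j != 0.
  apply: contrapT => no_lj; apply: no_bound; exists L => l Ll j.
  by apply/eqP/negPn/negP => ne; apply: no_lj; exists l, j.
have [ls [js [ls_ge lj_diag]]] := sliding_hump (fun l => phi_fin _) unit_coord unbounded.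
have js_inj : injective js.
  by move=> k k' jkk'; apply/eqP/negPn; rewrite -lj_diag -jkk' lj_diag eqxx.
have [F [FD F_sum]] := additive_sum_along phi_free js_inj.
have [N HN] := hull_of_specker F FD.
have /eqP := HN (ls N) (ls_ge N); rewrite mulrzz mulf_eq0 (negbTE (d_neq0 _)) orbF.
rewrite (F_sum _ N.+1) => [|k Nk]; last by apply/eqP; rewrite lj_diag ltn_eqF.
rewrite big_ord_recr /= big1 ?add0r => [|k _]; last first.
  by apply/eqP; rewrite lj_diag gtn_eqF.
by rewrite lj_diag eqxx.
Qed.

Lemma hull_self_binding : self_binding hull.
Proof.
split; [|split].
- exists nat, (fun (y : hull) (i : nat) => hull_coord i y).
  split=> [x y i | x y xy]; first exact: raddfD.
  by apply: hull_coord_inj => i; have := congr1 (fun f => f i) xy.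
- move=> n; exists n.+1, (fun i : 'I_n.+1 => hull_unit i); split=> // c c0 i.
  have := congr1 (hull_coord i) c0; rewrite raddf0 hull_coord_sum_unit.
  by rewrite (big_pred1 i) // => l; rewrite /= -val_eqE.
move=> J phi phi_free; have [L HL] := hull_hom_unit_eventually0 phi_free.
exists L => m x _ x_indep; rewrite leqNgt; apply/negP => Lm.
have [c c_neq0 cA] := int_mx_ker (\matrix_(k < m, i < L) hull_coord i (x k)) Lm.
suff c0 : forall k, c 0 k = 0.
  by move/eqP: c_neq0; apply; apply/rowP => k; rewrite c0 mxE.
apply: x_indep => j /=; have phijD := additive_fun_morph (proj1 phi_free) j.
have y0 : phi (\sum_(k < m) x k *~ c 0 k) j = 0.
  apply: (hull_hom_vanish (proj1 phi_free) HL) => i iL.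
  have := congr1 (fun A : 'M_(1, L) => A 0 (Ordinal iL)) cA; rewrite !mxE => <-.
  by rewrite raddf_sum; apply: eq_bigr => k _; rewrite raddfMz mxE mulrzz mulrC.
rewrite -[RHS]y0 (addmorph_sum phijD); apply: eq_bigr => k _.
by rewrite (addmorphMz phijD) mulrzz mulrC.
Qed.

End Hull.

Lemma additive_elimination (G : zmodType) (g : nat -> G -> int) (b : nat -> G)
    (x : G) k :
  (forall i, (i < k)%N -> {morph g i : u v / u + v}) ->
  (forall i j, (i < k)%N -> (j < k)%N -> (g i (b j) == 0) = (i != j)) ->
  (forall i, (i < k)%N -> g i x = 0) ->
  forall f : G -> int, {morph f : u v / u + v} -> f x != 0 ->
  exists f' : G -> int,
    [/\ {morph f' : u v / u + v}, forall i, (i < k)%N -> f' (b i) = 0 & f' x != 0].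
Proof.
elim: k => [|k IHk] gD gb gx f fD fx; first by exists f.
have [f1 [f1D f1b f1x]] := IHk (fun i ik => gD i (ltnW ik))
  (fun i j ik jk => gb i j (ltnW ik) (ltnW jk)) (fun i ik => gx i (ltnW ik)) f fD fx.
have gkbk_neq0 : g k (b k) != 0 by rewrite gb // eqxx.
exists (fun u => g k (b k) * f1 u - f1 (b k) * g k u); split.
- by move=> u v; rewrite f1D (gD k) // !mulrDr opprD addrACA.
- move=> i; rewrite ltnS leq_eqVlt => /orP[/eqP -> | ik] /=.
    by rewrite mulrC subrr.
  have /eqP -> : g k (b i) == 0 by rewrite gb ?ltnS ?(ltnW ik) // gtn_eqF.
  by rewrite f1b // !mulr0 subr0.
- by rewrite /= gx // mulr0 subr0 mulf_neq0.
Qed.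

Section SpeckerDiagonal.
Variables (H : zmodType) (a : nat -> H).
Hypothesis H_torsionless : torsionless H.
Hypothesis a_neq0 : forall n, a n != 0.
Hypothesis a_specker : forall f : H -> int, {morph f : x y / x + y} ->
  exists N, forall n, (N <= n)%N -> f (a n) = 0.

Definition biorthogonal (i j : nat) (p q : nat * (H -> int)) :=
  [/\ {morph p.2 : x y / x + y}, (i <= p.1)%N & (p.2 (a q.1) == 0) = (i != j)].

Lemma biorthogonal_rcons p0 s : pairwise_upto p0 biorthogonal s ->
  exists p, pairwise_upto p0 biorthogonal (rcons s p).
Proof.
move=> hs; pose k := size s; pose n i := (nth p0 s i).1; pose g i := (nth p0 s i).2.
have gD i : (i < k)%N -> {morph g i : x y / x + y} by move=> ik; case: (hs i i ik ik).
have gb i j : (i < k)%N -> (j < k)%N -> (g i (a (n j)) == 0) = (i != j).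
  by move=> ik jk; case: (hs i j ik jk).
have [N gN] : exists N, forall i m, (i < k)%N -> (N <= m)%N -> g i (a m) = 0.
  by apply: eventually_forall_ltn => i ik; apply/a_specker/gD.
pose m := maxn N k; have [f [fD fm]] := torsionless_separating H_torsionless (a_neq0 m).
have [f' [f'D f'b f'm]] := additive_elimination gD gb
  (fun i ik => gN i m ik (leq_maxl N k)) fD fm.
move: f'b gN; rewrite /n /g => f'b gN.
exists (m, f') => i j; rewrite size_rcons !ltnS [(i <= _)%N]leq_eqVlt.
rewrite [(j <= _)%N]leq_eqVlt /biorthogonal !nth_rcons -/k.
case/orP=> [/eqP -> | ik]; case/orP=> [/eqP -> | jk].
- by rewrite ltnn !eqxx leq_maxr /= (negbTE f'm).
- by rewrite ltnn jk !eqxx leq_maxr /= f'b // eqxx gtn_eqF.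
- rewrite ik ltnn eqxx (ltn_eqF ik) /= (gN i m ik (leq_maxl N k)) eqxx.
  by case: (hs i i ik ik).
- by rewrite ik jk; apply: hs.
Qed.

Lemma specker_diagonal : exists (n : nat -> nat) (g : nat -> {additive H -> int}),
  (forall l, (l <= n l)%N) /\ forall k l, (g k (a (n l)) == 0) = (k != l).
Proof.
have [u uP] := pairwise_choice (biorthogonal_rcons (p0 := (0%N, fun=> 0))).
have uD k : {morph (u k).2 : x y / x + y} by case: (uP k k).
pose g k : {additive H -> int} :=
  HB.pack (u k).2 (GRing.isZmodMorphism.Build _ _ _ (addmorphB (uD k))).
by exists (fst \o u), g; split=> [l | k l]; [case: (uP l l) | case: (uP k l)].
Qed.

End SpeckerDiagonal.

Definition factorial_embedding (H : zmodType) (g : nat -> {additive H -> int})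
  (h : H) : nat -> int := fun i => g i h *+ i`!.

Lemma factorial_embedding_is_zmod_morphism (H : zmodType)
    (g : nat -> {additive H -> int}) : zmod_morphism (factorial_embedding g).
Proof.
by move=> x y; apply/funext => i; rewrite /factorial_embedding raddfB mulrnBl.
Qed.

HB.instance Definition _ H g := GRing.isZmodMorphism.Build H (nat -> int)
  (@factorial_embedding H g) (factorial_embedding_is_zmod_morphism g).

Section FactorialEmbedding.
Variables (H : zmodType) (g : nat -> {additive H -> int}).

Lemma factorial_embedding_dvd h m : (0 < m)%N ->
  exists M, forall i, (M <= i)%N -> (m %| factorial_embedding g h i)%Z.
Proof.
move=> m_gt0; exists m => i mi; rewrite /factorial_embedding -mulr_natr natz.
by apply: dvdz_mull; rewrite dvdzE dvdn_fact // m_gt0.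
Qed.

Lemma factorial_embedding_diag (b : nat -> H) :
  (forall k l, (g k (b l) == 0) = (k != l)) ->
  forall l i, factorial_embedding g (b l) i = if i == l then g l (b l) *+ l`! else 0.
Proof.
move=> gb l i; rewrite /factorial_embedding; case: eqP => [-> // | /eqP il].
have /eqP -> : g i (b l) == 0 by rewrite gb.
by rewrite mul0rn.
Qed.

End FactorialEmbedding.

Theorem theorem7 (H : zmodType) :
  specker H -> exists G : zmodType, self_binding G /\ exists f : G -> H, injective f.
Proof.
move=> [H_torsionless [a [a_neq0 a_specker]]].
have [n [g [n_ge g_diag]]] := specker_diagonal H_torsionless a_neq0 a_specker.
exists (hull (factorial_embedding g)); split.
  apply: (hull_self_binding (factorial_embedding_dvd g) (b := a \o n)
    (d := fun l => g l (a (n l)) *+ l`!)).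
  - by move=> l; rewrite mulrn_eq0 negb_or -lt0n fact_gt0 g_diag eqxx.
  - exact: factorial_embedding_diag.
  - move=> f fD; have [N HN] := a_specker _ fD.
    by exists N => l Nl; apply/HN/(leq_trans Nl).
have [e e_inj] := hull_inj_pair (factorial_embedding g).
have [p p_inj] := torsionless_pair_inj H_torsionless (a_neq0 0%N).
by exists (p \o e); apply: inj_comp.
Qed.
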